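(* Let $\mathcal{C}$ be a simplicial complex on $[n]$. Then $\mathcal{C}$ is unimodular if and only if its Lawrence lifting $\Lambda(\mathcal{C})$ is unimodular.
   Context: A simplicial complex on $[n]$ is a family of subsets of $[n]$ closed under subsets; facets are inclusion-maximal faces. $\Lambda(\mathcal{C})$ is the simplicial complex on $[n+1]$ with facets $[n]$ and $F\cup\{n+1\}$ for each facet $F$ of $\mathcal{C}$. $\mathcal{A}_{\mathcal{C}}$ is the $0/1$ matrix with columns indexed by $\mathbf{i}\in\{1,2\}^n$ and rows indexed by pairs $(F,\mathbf{e})$, $F$ a facet, $\mathbf{e}\in\{1,2\}^F$; entry $1$ iff $\mathbf{e}=\mathbf{i}|_F$. An integer matrix is unimodular if every circuit (nonzero integer kernel vector with coprime entries and inclusion-minimal support) has entries in $\{0,\pm1\}$; a complex is unimodular if its matrix $\mathcal{A}$ is. *)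

From mathcomp Require Import all_boot all_order all_algebra.
Set Implicit Arguments. Unset Strict Implicit. Unset Printing Implicit Defensive.
Import GRing.Theory Num.Theory.
Local Open Scope ring_scope.

(* A simplicial complex on [n] (vertices 'I_n, vertex k+1 of the paper is k):
   a family of subsets closed under taking subsets. *)
Definition is_simplicial_complex (n : nat) (C : {set {set 'I_n}}) : Prop :=
  forall F G : {set 'I_n}, F \in C -> G \subset F -> G \in C.

Definition facets (n : nat) (C : {set {set 'I_n}}) : {set {set 'I_n}} :=
  [set F in C | [forall G in C, (F \subset G) ==> (G == F)]].

(* Lawrence lifting: the simplicial complex on [n+1] generated by the facets
   [n] and F u {n+1} (F a facet of C); the new vertex n+1 is ord_max. *)
Definition lawrence (n : nat) (C : {set {set 'I_n}}) : {set {set 'I_n.+1}} :=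
  [set G : {set 'I_n.+1} |
     (G \subset [set i : 'I_n.+1 | i != ord_max])
     || [exists F in facets C,
           G \subset ord_max |: [set widen_ord (leqnSn n) x | x in F]]].

(* Rows of A_C: pairs (F, e) with F a facet and e in {1,2}^F; the label e is
   represented by a function 'I_n -> bool (false = 1, true = 2) that is
   normalised to false outside F.  Columns: i in {1,2}^n as {ffun 'I_n -> bool}. *)
Definition row_index (n : nat) (C : {set {set 'I_n}}) :=
  {p : {set 'I_n} * {ffun 'I_n -> bool} |
     (p.1 \in facets C) && [forall v in ~: p.1, p.2 v == false]}.

Definition col_index (n : nat) := {ffun 'I_n -> bool}.

Definition cmatrix (n : nat) (C : {set {set 'I_n}})
    (r : row_index C) (c : col_index n) : int :=
  if [forall v in (sval r).1, c v == (sval r).2 v] then 1 else 0.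

Section Unimod.
Variables (R Col : finType) (A : R -> Col -> int).

Definition in_kernel (x : Col -> int) : Prop :=
  forall r : R, \sum_(c : Col) A r c * x c = 0.

Definition supp (x : Col -> int) : {set Col} := [set c | x c != 0].

Definition circuit (x : Col -> int) : Prop :=
  [/\ in_kernel x, supp x != set0,
      (\big[gcdn/0%N]_(c : Col) `|x c|%N)%N = 1%N &
      forall y : Col -> int, in_kernel y -> supp y != set0 ->
        ~ (supp y \proper supp x)].

Definition unimodular : Prop :=
  forall x : Col -> int, circuit x -> forall c : Col, x c \in [:: 0; 1; -1].
End Unimod.

Definition unimodular_complex (n : nat) (C : {set {set 'I_n}}) : Prop :=
  unimodular (@cmatrix n C).

From mathcomp Require Import all_boot all_order all_algebra.
From Stdlib Require Import FunctionalExtensionality.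
Set Implicit Arguments. Unset Strict Implicit. Unset Printing Implicit Defensive.
Import GRing.Theory Num.Theory.
Local Open Scope ring_scope.

(* A vector x lies in the kernel of A_C iff, for every facet F, all marginals
   of x over the coordinates in F vanish (equivalently, for every face).  The
   facet [n] of the Lawrence lifting forces x(d,2) = -x(d,1), so every kernel
   vector of A_Λ(C) is the signed lift of y = x(.,1); the marginal of that lift
   over F ∪ {n+1} is ± the marginal of y over F.  Lifting is therefore a
   bijection between the two kernels preserving supports, their inclusions and
   gcds, so it matches the circuits, and corresponding circuits have the same
   entries up to sign. *)

Definition vanishing_marginals m (x : col_index m -> int) (G : {set 'I_m}) : Prop :=
  forall e : col_index m,
    \sum_(c : col_index m | [forall v in G, c v == e v]) x c = 0.

Lemma vanishing_marginalsS m (x : col_index m -> int) (G H : {set 'I_m}) :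
  H \subset G -> vanishing_marginals x G -> vanishing_marginals x H.
Proof.
move=> /subsetP HG xG e.
pose restrG (c : col_index m) : col_index m :=
  [ffun v => if v \in G then c v else false].
rewrite (partition_big restrG xpredT) //=; apply: big1 => j _.
have [/andP[/forallP jH /forallP jG]|jNH] :=
  boolP ([forall v in H, j v == e v] && [forall v in ~: G, j v == false]).
  rewrite -[RHS](xG j); apply: eq_bigl => c.
  apply/andP/forallP => [[_ /eqP <-] v|cj].
    by apply/implyP => vG; rewrite ffunE vG.
  split.
    apply/forallP => v; apply/implyP => vH.
    by have := jH v; rewrite vH => /eqP <-; have := cj v; rewrite HG.
  apply/eqP/ffunP => v; rewrite ffunE; case: ifP => vG.
    by have := cj v; rewrite vG => /eqP.
  by have := jG v; rewrite inE vG => /eqP ->.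
apply: big_pred0 => c; apply/negbTE/negP => /andP[/forallP ce /eqP cj].
case/negP: jNH; apply/andP; split; apply/forallP => v; apply/implyP => vI.
  by rewrite -cj ffunE HG //; have := ce v; rewrite vI.
by rewrite -cj ffunE; move: vI; rewrite inE => /negbTE ->.
Qed.

Lemma exists_facet m (C : {set {set 'I_m}}) G :
  G \in C -> exists2 F, F \in facets C & G \subset F.
Proof.
move=> GC; pose above F := (F \in C) && (G \subset F).
have aboveG : above G by rewrite /above GC subxx.
have [F /andP[FC GF] Fmax] := arg_maxnP (fun F : {set 'I_m} => #|F|) aboveG.
exists F => //; rewrite inE FC /=; apply/forall_inP => K KC.
apply/implyP => FK; rewrite eq_sym eqEcard FK /=.
by apply: Fmax; rewrite /above KC (subset_trans GF FK).
Qed.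

Lemma cmatrix_row_sum m (C : {set {set 'I_m}}) (r : row_index C) x :
  \sum_c cmatrix r c * x c =
  \sum_(c : col_index m | [forall v in (sval r).1, c v == (sval r).2 v]) x c.
Proof.
rewrite [RHS]big_mkcond; apply: eq_bigr => c _; rewrite /cmatrix.
by case: ifP; rewrite ?mul1r ?mul0r.
Qed.

Lemma cmatrix_kernel_facets m (C : {set {set 'I_m}}) x :
  in_kernel (@cmatrix m C) x <->
  forall F, F \in facets C -> vanishing_marginals x F.
Proof.
split=> [xker F Ff e|xF r]; last first.
  by rewrite cmatrix_row_sum; apply: xF; case/andP: (svalP r).
pose eF : col_index m := [ffun v => if v \in F then e v else false].
have rF : ((F, eF).1 \in facets C) && [forall v in ~: (F, eF).1, (F, eF).2 v == false].
  by rewrite Ff /=; apply/forall_inP => v; rewrite inE ffunE => /negbTE ->.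
rewrite -[RHS](xker (exist _ (F, eF) rF)) cmatrix_row_sum /=.
by apply: eq_bigl => c; apply: eq_forallb => v; rewrite ffunE; case: (v \in F).
Qed.

Lemma cmatrix_kernel_faces m (C : {set {set 'I_m}}) x :
  in_kernel (@cmatrix m C) x <-> forall G, G \in C -> vanishing_marginals x G.
Proof.
apply: (iff_trans (cmatrix_kernel_facets C x)); split=> xC G GC.
  by have [F Ff GF] := exists_facet GC; apply: vanishing_marginalsS GF (xC F Ff).
by apply: xC; move: GC; rewrite inE => /andP[].
Qed.

Lemma mem_sign_set_opp (a : int) : (- a \in [:: 0; 1; -1]) = (a \in [:: 0; 1; -1]).
Proof.
rewrite !inE oppr_eq0 eqr_oppLR eqr_opp.
by case: (a == 1); case: (a == -1); rewrite ?orbT ?orbF.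
Qed.

Section LastCoordinate.
Variable n : nat.
Local Notation widen := (widen_ord (leqnSn n)).

Definition col_init (c : col_index n.+1) : col_index n := [ffun i => c (widen i)].

Definition col_snoc (d : col_index n) (b : bool) : col_index n.+1 :=
  [ffun j => if unlift ord_max j is Some i then d i else b].

Lemma lift_max_widen (i : 'I_n) : lift ord_max i = widen i.
Proof. by apply: val_inj; rewrite /= /bump leqNgt ltn_ord. Qed.

Lemma col_snoc_widen d b i : col_snoc d b (widen i) = d i.
Proof. by rewrite ffunE -lift_max_widen liftK. Qed.

Lemma col_snoc_max d b : col_snoc d b ord_max = b.
Proof. by rewrite ffunE unlift_none. Qed.

Lemma col_init_snoc d b : col_init (col_snoc d b) = d.
Proof. by apply/ffunP=> i; rewrite ffunE col_snoc_widen. Qed.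

Lemma col_snoc_init c : col_snoc (col_init c) (c ord_max) = c.
Proof.
apply/ffunP=> j; rewrite ffunE; case: unliftP => [i ->|->] //.
by rewrite ffunE lift_max_widen.
Qed.

Lemma big_col_snoc (R : Type) (idx : R) (op : Monoid.com_law idx)
    (f : col_index n.+1 -> R) :
  \big[op/idx]_c f c = \big[op/idx]_d \big[op/idx]_(b : bool) f (col_snoc d b).
Proof.
rewrite pair_big (reindex (fun p : col_index n * bool => col_snoc p.1 p.2)) /=.
  by apply: eq_bigr => -[d b].
exists (fun c => (col_init c, c ord_max)) => [[d b] _|c _] /=.
  by rewrite col_init_snoc col_snoc_max.
by rewrite col_snoc_init.
Qed.

Lemma forall_in_nonmax (P : pred 'I_n.+1) :
  [forall v in [set i : 'I_n.+1 | i != ord_max], P v] = [forall u, P (widen u)].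
Proof.
apply/forall_inP/forallP => [PI u|Pw u].
  by apply: PI; rewrite inE neq_ltn /= ltn_ord.
rewrite inE; case: (unliftP ord_max u) => [i ->|->]; last by rewrite eqxx.
by rewrite lift_max_widen.
Qed.

Lemma forall_in_cone (F : {set 'I_n}) (P : pred 'I_n.+1) :
  [forall v in ord_max |: [set widen x | x in F], P v] =
  P ord_max && [forall u in F, P (widen u)].
Proof.
apply/forall_inP/andP => [PI|[Pmax /forall_inP PF] v].
  split; first by apply: PI; rewrite setU11.
  by apply/forall_inP => u uF; apply: PI; rewrite inE imset_f ?orbT.
by case/setU1P => [->//|/imsetP[u uF ->]]; apply: PF.
Qed.
End LastCoordinate.

Section Lawrence.
Variables (n : nat) (C : {set {set 'I_n}}).
Local Notation widen := (widen_ord (leqnSn n)).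
Local Notation nonmax := [set i : 'I_n.+1 | i != ord_max].
Local Notation cone F := (ord_max |: [set widen u | u in F]).
Local Notation A := (@cmatrix n C).
Local Notation LA := (@cmatrix n.+1 (lawrence C)).

Lemma lawrence_kernel x :
  in_kernel LA x <-> vanishing_marginals x nonmax /\
    forall F, F \in facets C -> vanishing_marginals x (cone F).
Proof.
apply: (iff_trans (cmatrix_kernel_faces _ x)); split=> [xL|[xn xF] G].
  split; first by apply: xL; rewrite inE subxx.
  by move=> F Ff; apply: xL; rewrite inE; apply/orP; right; apply/existsP;
    exists F; rewrite Ff subxx.
rewrite inE => /orP[Gn|/existsP[F /andP[Ff GF]]].
  exact: vanishing_marginalsS Gn xn.
exact: vanishing_marginalsS GF (xF F Ff).
Qed.

Definition lawrence_lift (y : col_index n -> int) (c : col_index n.+1) : int :=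
  if c ord_max then - y (col_init c) else y (col_init c).

Lemma sum_col_init_eq (x : col_index n.+1 -> int) d :
  \sum_(c : col_index n.+1 | col_init c == d) x c =
  x (col_snoc d true) + x (col_snoc d false).
Proof.
rewrite big_mkcond big_col_snoc /= (bigD1 d) //= [X in _ + X]big1 ?addr0.
  by rewrite big_bool /= !col_init_snoc eqxx.
by move=> d' /negbTE dd'; rewrite big_bool /= !col_init_snoc dd' addr0.
Qed.

Lemma forall_nonmax_eq (c e : col_index n.+1) :
  [forall v in nonmax, c v == e v] = (col_init c == col_init e).
Proof.
rewrite (forall_in_nonmax (fun v => c v == e v)); apply/forallP/eqP => [ce|ce u].
  by apply/ffunP => u; rewrite !ffunE; apply/eqP.
by move/ffunP: ce => /(_ u); rewrite !ffunE => ->.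
Qed.

Lemma vanishing_marginals_nonmax x :
  vanishing_marginals x nonmax <->
  forall d, x (col_snoc d true) = - x (col_snoc d false).
Proof.
have sumE (e : col_index n.+1) : \sum_(c : col_index n.+1 | [forall v in nonmax, c v == e v]) x c =
              x (col_snoc (col_init e) true) + x (col_snoc (col_init e) false).
  by rewrite -sum_col_init_eq; apply: eq_bigl => c; rewrite forall_nonmax_eq.
split=> [xn d|xN e]; last by rewrite sumE xN addNr.
by apply/eqP; rewrite -addr_eq0 -(xn (col_snoc d false)) sumE col_init_snoc.
Qed.

Lemma sum_lawrence_lift_cone y (F : {set 'I_n}) (e : col_index n.+1) :
  \sum_(c : col_index n.+1 | [forall v in cone F, c v == e v]) lawrence_lift y c =
  (if e ord_max then -1 else 1) *
    \sum_(d : col_index n | [forall u in F, d u == col_init e u]) y d.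
Proof.
rewrite (eq_bigl _ _ (fun c : col_index n.+1 => forall_in_cone F (fun v => c v == e v))).
rewrite big_mkcond big_col_snoc /= [in RHS]big_mkcond big_distrr /=.
apply: eq_bigr => d _; rewrite big_bool /= /lawrence_lift !col_snoc_max !col_init_snoc.
have snocE b : [forall u in F, col_snoc d b (widen u) == e (widen u)] =
               [forall u in F, d u == col_init e u].
  by apply: eq_forallb => u; rewrite col_snoc_widen ffunE.
rewrite !snocE; case: (e ord_max); case: [forall u in F, d u == col_init e u];
  by rewrite /= ?mulr0 ?mul1r ?addr0 ?add0r ?mulN1r.
Qed.

Lemma vanishing_marginals_lift y (F : {set 'I_n}) :
  vanishing_marginals (lawrence_lift y) (cone F) <-> vanishing_marginals y F.
Proof.
split=> [yL e|yF e]; last by rewrite sum_lawrence_lift_cone yF mulr0.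
by have := yL (col_snoc e false); rewrite sum_lawrence_lift_cone col_snoc_max
  mul1r col_init_snoc.
Qed.

Lemma lawrence_lift_kernel y : in_kernel LA (lawrence_lift y) <-> in_kernel A y.
Proof.
apply: (iff_trans (lawrence_kernel _)); apply: iff_sym.
apply: (iff_trans (cmatrix_kernel_facets C y)); split=> [yF|[_ yF] F Ff].
  split; last by move=> F Ff; apply/vanishing_marginals_lift/yF.
  by apply/vanishing_marginals_nonmax => d;
    rewrite /lawrence_lift !col_snoc_max !col_init_snoc.
exact/vanishing_marginals_lift/yF.
Qed.

Lemma lawrence_kernel_lift x :
  in_kernel LA x -> x = lawrence_lift (fun d => x (col_snoc d false)).
Proof.
case/lawrence_kernel => /vanishing_marginals_nonmax xN _.
apply: functional_extensionality => c.
rewrite -[c]col_snoc_init /lawrence_lift col_snoc_max col_init_snoc.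
by case: (c ord_max); rewrite ?xN.
Qed.

Lemma lawrence_lift_eq0 y c : (lawrence_lift y c == 0) = (y (col_init c) == 0).
Proof. by rewrite /lawrence_lift; case: (c ord_max); rewrite ?oppr_eq0. Qed.

Lemma supp_lawrence_lift_subset y z :
  (supp (lawrence_lift y) \subset supp (lawrence_lift z)) = (supp y \subset supp z).
Proof.
apply/subsetP/subsetP => yz d.
  by have := yz (col_snoc d false); rewrite !inE !lawrence_lift_eq0 col_init_snoc.
by rewrite !inE !lawrence_lift_eq0 => yd; have := yz (col_init d); rewrite !inE; apply.
Qed.

Lemma supp_lawrence_lift_proper y z :
  (supp (lawrence_lift y) \proper supp (lawrence_lift z)) = (supp y \proper supp z).
Proof. by rewrite !properE !supp_lawrence_lift_subset. Qed.

Lemma supp_lawrence_lift_eq0 y : (supp (lawrence_lift y) == set0) = (supp y == set0).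
Proof.
apply/eqP/eqP => /setP y0; apply/setP => c.
  by have := y0 (col_snoc c false); rewrite !inE lawrence_lift_eq0 col_init_snoc.
by have := y0 (col_init c); rewrite !inE lawrence_lift_eq0.
Qed.

Lemma gcd_lawrence_lift y :
  (\big[gcdn/0%N]_(c : col_index n.+1) `|lawrence_lift y c|%N)%N =
  (\big[gcdn/0%N]_(d : col_index n) `|y d|%N)%N.
Proof.
rewrite big_col_snoc; apply: eq_bigr => d _.
by rewrite big_bool /= /lawrence_lift !col_snoc_max !col_init_snoc abszN gcdnn.
Qed.

Lemma lawrence_lift_circuit y : circuit LA (lawrence_lift y) <-> circuit A y.
Proof.
split=> -[yker ynz ygcd ymin]; split.
- exact/lawrence_lift_kernel.
- by rewrite -supp_lawrence_lift_eq0.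
- by rewrite -gcd_lawrence_lift.
- move=> z zker znz zy; apply: (ymin (lawrence_lift z)).
  + exact/lawrence_lift_kernel.
  + by rewrite supp_lawrence_lift_eq0.
  + by rewrite supp_lawrence_lift_proper.
- exact/lawrence_lift_kernel.
- by rewrite supp_lawrence_lift_eq0.
- by rewrite gcd_lawrence_lift.
- move=> z zker; have zE := lawrence_kernel_lift zker; rewrite zE in zker *.
  move=> znz zy; apply: (ymin (fun d => z (col_snoc d false))).
  + exact/lawrence_lift_kernel.
  + by rewrite -supp_lawrence_lift_eq0.
  + by rewrite -supp_lawrence_lift_proper.
Qed.
End Lawrence.

Theorem proposition3p15 (n : nat) (C : {set {set 'I_n}}) :
  is_simplicial_complex C ->
  (unimodular_complex C <-> unimodular_complex (lawrence C)).
Proof.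
move=> _; split=> Aunimod x.
  move=> xcirc; have [xker _ _ _] := xcirc.
  rewrite (lawrence_kernel_lift xker) in xcirc *.
  move/lawrence_lift_circuit: xcirc => /Aunimod xunit c.
  by rewrite /lawrence_lift; case: (c ord_max); rewrite ?mem_sign_set_opp.
move=> /(lawrence_lift_circuit C) /Aunimod xunit d.
by have := xunit (col_snoc d false); rewrite /lawrence_lift col_snoc_max col_init_snoc.
Qed.
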